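(* Let $T$ be a tree of order $n \geq 4$, and let $u$ and $v$ be two distinct vertices of $T$ which are non-adjacent in $\Lambda(T)$. Then exactly one of the following cases occurs: (1) $u$ and $v$ are two leaves of $T$, both adjacent to a common third vertex of $T$; (2) $u$ and $v$ are adjacent in $T$, and every vertex of $T$ other than $u$ and $v$ is a leaf adjacent to exactly one of $u$ and $v$; (3) $u$ and $v$ are at distance $3$ in $T$, joined by the path $u - w - x - v$, and every vertex of $T$ other than $u, w, x, v$ is a leaf adjacent to exactly one of $u$ and $v$.
   Context: All graphs are simple and finite. For a graph $G$ and disjoint $X, Y \subseteq V(G)$, $E(X,Y)$ denotes the set of edges with one endpoint in $X$ and the other in $Y$. An ordered pair $(X,Y)$ of disjoint subsets of $V(G)$ with $|X|=|Y|=2$ is an odd pair of $G$ if $|E(X,Y)|$ is odd. A $2$-subset $\{u,v\}\subseteq V(G)$ is an odd set if it is the first component of some odd pair of $G$. The graph $\Lambda(G)$ has vertex set $V(G)$, and $uv$ is an edge of $\Lambda(G)$ iff $\{u,v\}$ is an odd set of $G$. *)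

From mathcomp Require Import all_boot.
Set Implicit Arguments. Unset Strict Implicit. Unset Printing Implicit Defensive.

Definition simple_graph (T : finType) (e : rel T) : Prop :=
  symmetric e /\ irreflexive e.

Definition connected_graph (T : finType) (e : rel T) : Prop :=
  forall x y : T, connect e x y.

Definition acyclic_graph (T : finType) (e : rel T) : Prop :=
  forall c : seq T, 3 <= size c -> uniq c -> ~~ cycle e c.

Definition is_tree (T : finType) (e : rel T) : Prop :=
  simple_graph e /\ connected_graph e /\ acyclic_graph e.

Definition nbhd (T : finType) (e : rel T) (x : T) : {set T} := [set y | e x y].
Definition leaf (T : finType) (e : rel T) (x : T) : bool := #|nbhd e x| == 1.

Definition nedges (T : finType) (e : rel T) (X Y : {set T}) : nat :=
  #|[set p : T * T | [&& p.1 \in X, p.2 \in Y & e p.1 p.2]]|.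

Definition odd_pair (T : finType) (e : rel T) (X Y : {set T}) : bool :=
  [&& [disjoint X & Y], #|X| == 2, #|Y| == 2 & odd (nedges e X Y)].

Definition odd_set (T : finType) (e : rel T) (X : {set T}) : bool :=
  [exists Y : {set T}, odd_pair e X Y].

Definition Lambda (T : finType) (e : rel T) : rel T :=
  fun u v => (u != v) && odd_set e [set u; v].

Definition exactly_one3 (P Q R : Prop) : Prop :=
  (P /\ ~ Q /\ ~ R) \/ (~ P /\ Q /\ ~ R) \/ (~ P /\ ~ Q /\ R).

(** If {u, v} is not an odd set of the tree, then for any two vertices a, b outside
    {u, v} the number of edges between {u, v} and {a, b} is even, so all vertices
    outside {u, v} have the same number of neighbours in {u, v} modulo 2.  If that
    parity is even, u and v have the same outer neighbours; a tree has no triangle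
    and no 4-cycle, so u, v are non-adjacent leaves hanging from one common vertex.
    If it is odd, every outer vertex sees exactly one of u, v; then u, v have no
    common neighbour, the u-v path has length 1 or 3, and a second neighbour of an
    outer vertex would close a cycle through that path. *)

From mathcomp Require Import all_boot.

Set Implicit Arguments.
Unset Strict Implicit.
Unset Printing Implicit Defensive.

Lemma exactly_one3_intro (P Q R : Prop) :
  (P -> ~ Q) -> (P -> ~ R) -> (Q -> ~ R) -> P \/ Q \/ R -> exactly_one3 P Q R.
Proof. by rewrite /exactly_one3; tauto. Qed.

Lemma exists_other (T : finType) (u v : T) :
  2 < #|T| -> exists z, z != u /\ z != v.
Proof.
move=> T_gt2; have : ~: [set u; v] != set0.
  rewrite -card_gt0 -(ltn_add2l #|[set u; v]|) cardsC addn0 cards2.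
  by apply: leq_ltn_trans _ T_gt2; case: (u != v).
by case/set0Pn => z; rewrite !inE negb_or => /andP[zu zv]; exists z.
Qed.

Lemma connect_exit (T : finType) (e : rel T) (S : {pred T}) x y :
  connect e x y -> x \in S -> y \notin S ->
  exists a b, [/\ a \in S, b \notin S & e a b].
Proof.
move=> /connectP[p + ->]; elim: p x => [|z p IHp] x /=; first by move=> _ ->.
move=> /andP[exz zp] xS; case zS: (z \in S); first exact: IHp.
by exists x, z; rewrite zS.
Qed.

Section Leaves.

Variables (T : finType) (e : rel T).

Lemma leaf_of_sole_neighbor z t : e z t -> (forall y, e z y -> y = t) -> leaf e z.
Proof.
move=> ezt sole; apply/cards1P; exists t; apply/setP => y.
by rewrite !inE; apply/idP/eqP => [/sole|->].
Qed.

Lemma leaf_neighbor_eq z a b : leaf e z -> e z a -> e z b -> a = b.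
Proof.
move=> /cards1P[t Nz] eza ezb.
have : a \in nbhd e z by rewrite inE.
have : b \in nbhd e z by rewrite inE.
by rewrite Nz !inE => /eqP -> /eqP ->.
Qed.

End Leaves.

Lemma nedgesE (T : finType) (e : rel T) (X Y : {set T}) :
  nedges e X Y = \sum_(x in X) \sum_(y in Y) e x y.
Proof.
rewrite /nedges -sum1_card.
transitivity (\sum_(x in X) \sum_(y in Y | e x y) 1).
  by rewrite pair_big_dep /=; apply: eq_bigl => -[x y]; rewrite inE.
by apply: eq_bigr => x _; rewrite big_mkcondr.
Qed.

Lemma nedges_set2 (T : finType) (e : rel T) (u v a b : T) : u != v -> a != b ->
  nedges e [set u; v] [set a; b] = e u a + e u b + (e v a + e v b).
Proof. by move=> uv ab; rewrite nedgesE !(big_setU1, big_set1) ?inE. Qed.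

Definition xor_neighbors (T : finType) (e : rel T) (u v : T) : Prop :=
  forall z, z != u -> z != v -> e u z (+) e v z.

Definition same_neighbors (T : finType) (e : rel T) (u v : T) : Prop :=
  forall z, z != u -> z != v -> e u z = e v z.

Section NotLambda.

Variables (T : finType) (e : rel T) (u v : T).
Hypotheses (uv : u != v) (not_Luv : ~~ Lambda e u v).

Lemma not_Lambda_parity a b : a != b -> a \notin [set u; v] -> b \notin [set u; v] ->
  e u a (+) e v a = e u b (+) e v b.
Proof.
move=> ab aS bS; apply/eqP; rewrite -negb_add; apply: contra not_Luv => odd_ab.
rewrite /Lambda uv; apply/existsP; exists [set a; b].
rewrite /odd_pair !cards2 uv ab nedges_set2 // !oddD !oddb.
rewrite disjoint_sym disjoints_subset subUset !sub1set !in_setC aS bS /=.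
by move: odd_ab; case: (e u a) (e v a) (e u b) (e v b) => [] [] [] [].
Qed.

Lemma not_Lambda_dichotomy : xor_neighbors e u v \/ same_neighbors e u v.
Proof.
have outside z : z != u -> z != v -> z \notin [set u; v].
  by move=> zu zv; rewrite !inE negb_or zu zv.
case: (boolP [exists z, [&& z != u, z != v & e u z (+) e v z]]).
  move=> /existsP[z0 /and3P[z0u z0v odd_z0]]; left => z zu zv.
  have [-> // | zz0] := eqVneq z z0.
  by rewrite (not_Lambda_parity zz0) ?outside.
move=> /existsPn even; right => z zu zv.
by apply/eqP; rewrite -negb_add; have := even z; rewrite zu zv.
Qed.

End NotLambda.

Definition twin_leaves (T : finType) (e : rel T) (u v : T) : Prop :=
  leaf e u /\ leaf e v /\ exists w : T, [/\ w != u, w != v, e u w & e v w].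

Definition double_star (T : finType) (e : rel T) (u v : T) : Prop :=
  e u v /\ forall z : T, z != u -> z != v -> leaf e z /\ (e z u (+) e z v).

Definition double_broom3 (T : finType) (e : rel T) (u v : T) : Prop :=
  ~~ e u v /\ ~ (exists y : T, e u y && e y v) /\
  exists w x : T,
    [/\ uniq [:: u; w; x; v], e u w, e w x, e x v &
        forall z : T, z \notin [:: u; w; x; v] -> leaf e z /\ (e z u (+) e z v)].

Lemma twin_leaves_nonadjacent (T : finType) (e : rel T) (u v : T) :
  twin_leaves e u v -> ~~ e u v.
Proof.
move=> [leaf_u [_ [w [wu wv euw _]]]]; apply: contra wv => euv.
by rewrite (leaf_neighbor_eq leaf_u euw euv).
Qed.

Ltac distinct := rewrite /= ?inE ?negb_or; repeat (apply/andP; split); by [|rewrite eq_sym].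

Section Tree.

Variables (T : finType) (e : rel T).
Hypotheses (e_sym : symmetric e) (e_irr : irreflexive e).
Hypotheses (e_conn : connected_graph e) (e_acyc : acyclic_graph e).

Lemma edge_neq x y : e x y -> x != y.
Proof. by apply: contraTneq => ->; rewrite e_irr. Qed.

Lemma cycle_free c : 3 <= size c -> uniq c -> cycle e c -> False.
Proof. by move=> c3 uc; apply/negP; apply: e_acyc. Qed.

Lemma triangle_free a b c : e a b -> e b c -> ~~ e a c.
Proof.
move=> eab ebc; apply/negP => eac.
have := edge_neq eab; have := edge_neq ebc; have := edge_neq eac => ac bc ab.
by apply: (@cycle_free [:: a; b; c]) => //; [distinct | rewrite /= eab ebc e_sym eac].
Qed.

Lemma four_cycle_free a b c d : a != c -> b != d -> e a b -> e b c -> e c d -> ~~ e a d.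
Proof.
move=> ac bd eab ebc ecd; apply/negP => ead.
have := edge_neq eab; have := edge_neq ebc; have := edge_neq ecd; have := edge_neq ead.
move=> ad cd bc ab; apply: (@cycle_free [:: a; b; c; d]) => //; first distinct.
by rewrite /= eab ebc ecd e_sym ead.
Qed.

Lemma path3_eq u z y v a b :
  uniq [:: u; z; y; v] -> uniq [:: u; a; b; v] ->
  e u z -> e z y -> e y v -> e u a -> e a b -> e b v -> z = a.
Proof.
rewrite /= !inE !negb_or !andbT.
move=> /and3P[/and3P[uz uy uv] /andP[zy zv] yv] /and3P[/and3P[ua ub _] /andP[ab av] bv].
move=> euz ezy eyv eua eab ebv; apply/eqP/negPn/negP => za.
have [zb | zb] := eqVneq z b.
  by rewrite -zb in eab; rewrite (negbTE (triangle_free eua eab)) in euz.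
have [ya | ya] := eqVneq y a.
  by rewrite -ya in eua; rewrite (negbTE (triangle_free euz ezy)) in eua.
have [yb | yb] := eqVneq y b.
  have eya : e y a by rewrite e_sym yb.
  rewrite -yb in ub.
  by rewrite (negbTE (four_cycle_free ub za euz ezy eya)) in eua.
apply: (@cycle_free [:: u; z; y; v; b; a]) => //; first distinct.
by rewrite /= euz ezy eyv e_sym ebv e_sym eab e_sym eua.
Qed.

Lemma leaf_of_shared_neighbors p q b :
  p != q -> e p b -> (forall y, e p y -> e q y) -> leaf e p.
Proof.
move=> pq epb shared; apply: (leaf_of_sole_neighbor epb) => y epy.
apply/eqP/negPn/negP => yb; rewrite eq_sym in yb.
have ebq : e b q by rewrite e_sym shared.
by move: (four_cycle_free pq yb epb ebq (shared y epy)); rewrite epy.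
Qed.

Lemma same_neighbors_nonadjacent u v :
  2 < #|T| -> same_neighbors e u v -> ~~ e u v.
Proof.
move=> T_gt2 same; apply/negP => euv; have [z [zu zv]] := exists_other u v T_gt2.
have := @connect_exit _ e [pred x | (x == u) || (x == v)] u z (e_conn u z).
rewrite !inE eqxx negb_or zu zv => /(_ isT isT) [a [b []]].
rewrite !inE negb_or => aS /andP[bu bv] eab.
have eub : e u b by case/orP: aS => /eqP ea; [rewrite -ea | rewrite same // -ea].
have ebv : e b v by rewrite e_sym -same.
by rewrite (negbTE (triangle_free eub ebv)) in euv.
Qed.

Lemma same_neighbors_twin_leaves u v :
  u != v -> same_neighbors e u v -> ~~ e u v -> twin_leaves e u v.
Proof.
move=> uv same neuv.
have := @connect_exit _ e [pred x | x == u] u v (e_conn u v).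
rewrite !inE eqxx eq_sym uv => /(_ isT isT) [a [b []]].
rewrite !inE => /eqP-> bu eub.
have bv : b != v by apply: contraNneq neuv => <-.
have evb : e v b by rewrite -same.
have u_to_v y : e u y -> e v y.
  move=> euy; have yu : y != u by rewrite eq_sym edge_neq.
  have yv : y != v by apply: contraNneq neuv => <-.
  by rewrite -same.
have v_to_u y : e v y -> e u y.
  move=> evy; have yv : y != v by rewrite eq_sym edge_neq.
  have yu : y != u by apply: contraNneq neuv => yu; rewrite e_sym -yu.
  by rewrite same.
split; first exact: leaf_of_shared_neighbors uv eub u_to_v.
split; first by apply: leaf_of_shared_neighbors evb v_to_u; rewrite eq_sym.
by exists b; rewrite bu bv eub evb.
Qed.

Lemma xor_neighbors_sym u v : xor_neighbors e u v -> xor_neighbors e v u.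
Proof. by move=> xuv z zv zu; rewrite addbC xuv. Qed.

Lemma xor_neighbors_no_common u v : xor_neighbors e u v -> ~ exists y, e u y && e y v.
Proof.
move=> xuv [y /andP[euy eyv]].
have yu : y != u by rewrite eq_sym edge_neq.
by have := xuv y yu (edge_neq eyv); rewrite euy e_sym eyv.
Qed.

Lemma xor_neighbors_leaf u v z :
  xor_neighbors e u v -> e u z -> z != v ->
  (forall y, y != u -> e z y -> ~~ e y v) -> leaf e z.
Proof.
move=> xuv euz zv no_path; have ezu : e z u by rewrite e_sym.
apply: (leaf_of_sole_neighbor ezu) => y ezy; apply/eqP/negPn/negP => yu.
have yv : y != v.
  by apply: contraTneq ezy => ->; have := xuv z (edge_neq ezu) zv; rewrite euz e_sym.
have [euy | neuy] := boolP (e u y).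
  by rewrite (negbTE (triangle_free euz ezy)) in euy.
have evy : e v y by have := xuv y yu yv; rewrite (negbTE neuy).
by rewrite e_sym (negbTE (no_path y yu ezy)) in evy.
Qed.

Lemma xor_neighbors_double_star u v :
  xor_neighbors e u v -> e u v -> double_star e u v.
Proof.
move=> xuv euv; split=> // z zu zv; split; last by rewrite !(e_sym z) xuv.
have := xuv z zu zv; case euz: (e u z) => /= evz.
  apply: (xor_neighbors_leaf xuv euz zv) => y yu ezy; apply: contraL euv => eyv.
  by apply: four_cycle_free euz ezy eyv; rewrite // eq_sym.
apply: (xor_neighbors_leaf (xor_neighbors_sym xuv) evz zu) => y yv ezy.
apply: contraL euv => eyu; rewrite e_sym.
by apply: four_cycle_free evz ezy eyu; rewrite // eq_sym.
Qed.

Lemma xor_neighbors_path3_leaf u a b v z :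
  xor_neighbors e u v -> uniq [:: u; a; b; v] -> e u a -> e a b -> e b v ->
  z \notin [:: u; a; b; v] -> e u z -> leaf e z.
Proof.
move=> xuv uabv eua eab ebv; rewrite !inE !negb_or => /and4P[zu za zb zv] euz.
apply: (xor_neighbors_leaf xuv euz zv) => y yu ezy; apply/negP => eyv.
have uv : u != v by move: uabv; rewrite /= !inE !negb_or => /and3P[/and3P[]].
have := edge_neq euz; have := edge_neq ezy; have := edge_neq eyv => yv zy uz.
have uzyv : uniq [:: u; z; y; v] by distinct.
by move/eqP: za; apply; apply: path3_eq uzyv uabv euz ezy eyv eua eab ebv.
Qed.

Lemma xor_neighbors_double_broom3 u v :
  u != v -> xor_neighbors e u v -> ~~ e u v -> double_broom3 e u v.
Proof.
move=> uv xuv neuv; have no_common := xor_neighbors_no_common xuv.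
have := @connect_exit _ e [pred x | (x == u) || e u x] u v (e_conn u v).
rewrite !inE eqxx negb_or (eq_sym v) uv neuv => /(_ isT isT) [a [b []]].
rewrite !inE negb_or => aS /andP[bu neub] eab.
have eua : e u a by case/orP: aS => // /eqP au; rewrite -au eab in neub.
have av : a != v by apply: contraNneq neuv => <-.
have bv : b != v by apply/eqP => bv; apply: no_common; exists a; rewrite eua -bv eab.
have evb : e v b by have := xuv b bu bv; rewrite (negbTE neub).
have ebv : e b v by rewrite e_sym.
have ua := edge_neq eua; have ab := edge_neq eab.
have uabv : uniq [:: u; a; b; v] by distinct.
split=> //; split=> //; exists a, b; split=> // z z_out.
have := z_out; rewrite !inE !negb_or => /and4P[zu za zb zv].
split; last by rewrite !(e_sym z) xuv.
have [euz | neuz] := boolP (e u z).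
  exact: xor_neighbors_path3_leaf xuv uabv eua eab ebv z_out euz.
have evz : e v z by have := xuv z zu zv; rewrite (negbTE neuz).
have eba : e b a by rewrite e_sym.
have eau : e a u by rewrite e_sym.
by apply: (xor_neighbors_path3_leaf (xor_neighbors_sym xuv) _ evb eba eau _ evz); distinct.
Qed.

End Tree.

Theorem lemma1 (T : finType) (e : rel T) (u v : T) :
  is_tree e -> 4 <= #|T| -> u != v -> ~~ Lambda e u v ->
  exactly_one3
    (* (1) two leaves adjacent to a common third vertex *)
    (leaf e u /\ leaf e v /\
       exists w : T, [/\ w != u, w != v, e u w & e v w])
    (* (2) adjacent, all other vertices leaves adjacent to exactly one of u, v *)
    (e u v /\
       forall z : T, z != u -> z != v -> leaf e z /\ (e z u (+) e z v))
    (* (3) distance 3 via u - w - x - v, all others leaves adjacent to exactly one of u, v *)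
    (~~ e u v /\ ~ (exists y : T, e u y && e y v) /\
       exists w x : T,
         [/\ uniq [:: u; w; x; v], e u w, e w x, e x v &
             forall z : T, z \notin [:: u; w; x; v] ->
               leaf e z /\ (e z u (+) e z v)]).
Proof.
move=> [[e_sym e_irr] [e_conn e_acyc]] T_ge4 uv not_Luv.
apply: (@exactly_one3_intro (twin_leaves e u v) (double_star e u v) (double_broom3 e u v)).
- by move=> /twin_leaves_nonadjacent/negP neuv [].
- move=> [_ [_ [w [_ _ euw evw]]]] [_ [no_common _]].
  by apply: no_common; exists w; rewrite euw e_sym.
- by move=> [euv _] [/negP].
have [xuv | same] := not_Lambda_dichotomy uv not_Luv.
  right; have [euv | neuv] := boolP (e u v); [left | right].
    exact: xor_neighbors_double_star.
  exact: xor_neighbors_double_broom3.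
have T_gt2 : 2 < #|T| := ltnW T_ge4.
by left; apply: same_neighbors_twin_leaves => //; apply: same_neighbors_nonadjacent.
Qed.
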